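(* Let $\alpha,\beta$ be words over $X$ such that $\alpha\beta$ has no repeated letters, $|\alpha|$ is even, and $|\beta|=2n$ with $n\ge1$. Then $$f[\alpha]\,f[\alpha\beta]^{\,n-1}=\sum s(\beta,x_1y_1\ldots x_ny_n)\,f[(\alpha\beta)\setminus x_1y_1]\,f[(\alpha\beta)\setminus x_2y_2]\cdots f[(\alpha\beta)\setminus x_ny_n].$$ The sum is over all perfect matchings $\{x_1,y_1\},\ldots,\{x_n,y_n\}$ of the set of letters of $\beta$, each matching counted once.
   Context: Setting. Let $X$ be a set and $R$ a commutative ring. Let $f$ assign to each ordered pair $(x,y)\in X\times X$ an element $f[xy]\in R$, subject to $f[xy]=-f[yx]$ and $f[xx]=0$ for all $x,y\in X$. Words. A word is a finite sequence of elements (letters) of $X$. Concatenation is written by juxtaposition, $\epsilon$ is the empty word, and $|\alpha|$ is the length of $\alpha$. For words $\alpha,\beta$, the word $\alpha\setminus\beta$ is obtained from $\alpha$ by deleting every letter that occurs in $\beta$. Sign. For words $\alpha,\beta$, set $s(\alpha,\beta)=0$ if $\alpha$ or $\beta$ has a repeated letter, or if $\beta$ contains a letter not in $\alpha$. Otherwise $s(\alpha,\beta)\in\{\pm1\}$ is the sign of the permutation that rearranges $\alpha$ into the word $\beta(\alpha\setminus\beta)$. Pfaffian. Let $\alpha=x_1\ldots x_{2n}$ be a word with distinct letters. Then $$f[\alpha]=\sum s(\alpha,y_1\ldots y_{2n})\,f[y_1y_2]\cdots f[y_{2n-1}y_{2n}],$$ where the sum is over the $(2n-1)(2n-3)\cdots1$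 partitions of $\{x_1,\ldots,x_{2n}\}$ into pairs $\{y_1,y_2\},\ldots,\{y_{2n-1},y_{2n}\}$. Each term does not depend on the order in which the pairs or their elements are listed. Further conventions: $f[\epsilon]=1$; $f[\alpha]=0$ if $\alpha$ has a repeated letter; and $f[\alpha]=0$ if $|\alpha|$ is odd. *)

From mathcomp Require Import all_boot all_algebra.
Set Implicit Arguments. Unset Strict Implicit. Unset Printing Implicit Defensive.
Import GRing.Theory.
Local Open Scope ring_scope.

Section Pfaff.
Variables (X : eqType) (R : comPzRingType).

Definition wminus (a b : seq X) : seq X := [seq x <- a | x \notin b].

Fixpoint inversions (a w : seq X) : nat :=
  if w is x :: w' then
    (count (fun y => index y a < index x a)%N w' + inversions a w')%N
  else 0%N.

Definition sgn (a b : seq X) : R :=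
  if uniq a && uniq b && all (fun y => y \in a) b
  then (-1) ^+ inversions a (b ++ wminus a b) else 0.

(* Enumeration of perfect matchings of the letters of a word (each matching
   exactly once), each output as a word y1 y2 ... y_{2n} whose consecutive
   pairs are the blocks: the first letter is paired with each other letter,
   and one recurses on the rest. [k] is fuel (at least the length). *)
Fixpoint matchings_aux (k : nat) (a : seq X) : seq (seq X) :=
  if k is k'.+1 then
    if a is x :: s then
      flatten [seq [seq x :: y :: m | m <- matchings_aux k' (rem y s)] | y <- s]
    else [:: [::]]
  else [:: [::]].

Definition matchings (a : seq X) : seq (seq X) := matchings_aux (size a) a.

Fixpoint pairs_of (w : seq X) : seq (X * X) :=
  if w is x :: y :: w' then (x, y) :: pairs_of w' else [::].

Definition pf (f : X -> X -> R) (a : seq X) : R :=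
  if uniq a && ~~ odd (size a) then
    \sum_(m <- matchings a) sgn a m * \prod_(p <- pairs_of m) f p.1 p.2
  else 0.

End Pfaff.

(* Pfaffians are computed by expansion along the first letter ([pfexp]); on words
   without repeated letters this agrees with the sum over perfect matchings.
   The key identity is the antisymmetry in (A, B) of
   cross_pf A B = \sum_i (-1)^i f[A b_i] f[B \ b_i], a Pfaffian analogue of the
   Plücker relations; for A = a x and B = a s it yields the expansion
   f[a] f[a x s] = \sum_(y in s) ± f[a x y] f[a (s \ y)].
   The theorem then follows by induction on n. Its right-hand side is the Pfaffian
   of the minors g c d = f[a b \ c d] on b; expand it along the first letter x of b.
   Moving y next to x in a b only rescales the minors by signs, so the cofactor of
   g x y is, up to sign, the right-hand side for (a x y, b \ x y), i.e.
   f[a x y] f[a b]^(n-2) by induction, and the expansion identity sums these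
   terms to f[a] f[a b]^(n-1). *)

From mathcomp Require Import all_boot all_algebra.
From mathcomp Require Import zify ring.
Set Implicit Arguments. Unset Strict Implicit. Unset Printing Implicit Defensive.
Import GRing.Theory.
Local Open Scope ring_scope.

Section AltSum.
Variables (X : eqType) (R : comPzRingType).
Implicit Types (F G : X -> seq X -> R) (s p q : seq X).

(* [altsum F s] is \sum_i (-1)^i F s_i (s with s_i deleted), see [altsumE]. *)
Fixpoint altsum F s : R :=
  if s is y :: v then F y v - altsum (fun z w => F z (y :: w)) v else 0.

Lemma eq_altsum F G s : F =2 G -> altsum F s = altsum G s.
Proof.
elim: s F G => [|y s IH] F G eqFG //=.
by rewrite eqFG (IH _ (fun z w => G z (y :: w))).
Qed.

Lemma eq_in_altsum F G s :
  (forall u y v, s = u ++ y :: v -> F y (u ++ v) = G y (u ++ v)) ->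
  altsum F s = altsum G s.
Proof.
elim: s F G => [|a s IH] F G eqFG //=.
rewrite (eqFG [::] a s) //; congr (_ - _).
by apply: IH => u y v eq_s; apply: (eqFG (a :: u)); rewrite eq_s.
Qed.

Lemma eq_altsum_shorter F G s :
  (forall y r, (size r < size s)%N -> F y r = G y r) -> altsum F s = altsum G s.
Proof.
move=> eqFG; apply: eq_in_altsum => u y v eq_s; apply: eqFG.
by rewrite eq_s !size_cat /= addnS ltnS.
Qed.

Lemma altsum0 s : altsum (fun _ _ => 0) s = 0.
Proof. by elim: s => [|y s /= ->]; rewrite ?subr0. Qed.

Lemma altsumD F G s : altsum (fun y r => F y r + G y r) s = altsum F s + altsum G s.
Proof.
elim: s F G => [|y s IH] F G /=; first by rewrite addr0.
by rewrite (IH (fun z w => F z (y :: w))) opprD addrACA.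
Qed.

Lemma altsumN F s : altsum (fun y r => - F y r) s = - altsum F s.
Proof.
elim: s F => [|y s IH] F /=; first by rewrite oppr0.
by rewrite (IH (fun z w => F z (y :: w))) opprD.
Qed.

Lemma altsumMl c F s : altsum (fun y r => c * F y r) s = c * altsum F s.
Proof.
elim: s F => [|y s IH] F /=; first by rewrite mulr0.
by rewrite (IH (fun z w => F z (y :: w))) mulrBr.
Qed.

Lemma altsumMr c F s : altsum (fun y r => F y r * c) s = altsum F s * c.
Proof. by rewrite mulrC -altsumMl; apply: eq_altsum => y r; rewrite mulrC. Qed.

Lemma altsum_cat F p q :
  altsum F (p ++ q) = altsum (fun y r => F y (r ++ q)) p
                      + (-1) ^+ size p * altsum (fun y r => F y (p ++ r)) q.
Proof.
elim: p F => [|a p IH] F /=; first by rewrite add0r mul1r.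
by rewrite (IH (fun z w => F z (a :: w))) exprS; ring.
Qed.

Lemma altsumE F s : uniq s ->
  altsum F s = \sum_(y <- s) (-1) ^+ index y s * F y (rem y s).
Proof.
elim: s F => [|a s IH] F /=; first by rewrite big_nil.
case/andP=> a_out uniq_s; rewrite (IH (fun z w => F z (a :: w))) // big_cons /=.
rewrite eqxx mul1r -sumrN; congr (_ + _); apply: eq_big_seq => y ys.
have /negbTE-> : a != y by apply: contraNneq a_out => ->.
by rewrite exprS mulN1r mulNr.
Qed.

Lemma exchange_altsum (H : X -> seq X -> X -> seq X -> R) p q :
  altsum (fun y r => altsum (H y r) p) q =
  altsum (fun z r' => altsum (fun y r => H y r z r') q) p.
Proof.
elim: q H => [|b q IH] H /=; first by rewrite altsum0.
by rewrite (IH (fun y r => H y (b :: r))) -altsumN -altsumD.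
Qed.

Lemma altsum_pair_consr (F : X -> X -> seq X -> R) v q :
  altsum (fun w r => altsum (fun w' r' => F w w' r') (v :: r)) q =
  altsum (fun w r => F w v r) q
  - altsum (fun w r => altsum (fun w' r' => F w w' (v :: r')) r) q.
Proof. by rewrite -altsumN -altsumD. Qed.

(* The double sum runs over the pairs i < j of positions, so exchanging the
   roles of the two letters reverses the sign. *)
Lemma altsum_pairC (F : X -> X -> seq X -> R) q :
  altsum (fun w r => altsum (fun w' r' => F w w' r') r) q =
  - altsum (fun w r => altsum (fun w' r' => F w' w r') r) q.
Proof.
elim: q F => [|v q IH] F /=; first by rewrite oppr0.
rewrite altsum_pair_consr (altsum_pair_consr (fun w w' r' => F w' w r')).
by rewrite (IH (fun w w' r' => F w w' (v :: r'))); ring.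
Qed.

Lemma altsum_pair_sym (F : X -> X -> seq X -> R) q :
  (forall w w' r, F w w' r = F w' w r) ->
  altsum (fun w r => altsum (fun w' r' => F w w' r') r) q = 0.
Proof.
elim: q F => [|v q IH] F symF //=.
rewrite altsum_pair_consr (IH (fun w w' r' => F w w' (v :: r'))) => [|*].
  by rewrite subr0 (eq_altsum (G := fun z w => F v z w)) ?subrr // => *; exact: symF.
exact: symF.
Qed.

Lemma altsum_swap F p y z q :
  (forall w u r, (size u + size r).+1 = (size p + size q)%N ->
     F w (u ++ z :: y :: r) = - F w (u ++ y :: z :: r)) ->
  altsum F (p ++ z :: y :: q) = - altsum F (p ++ y :: z :: q).
Proof.
elim: p F => [|x p IH] F F_swap /=.
  rewrite (@eq_in_altsum _ (fun w r => - F w (y :: z :: r)) q).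
    by rewrite altsumN; ring.
  by move=> u w v eq_q; apply: (F_swap w [::]); rewrite eq_q !size_cat /= addnS.
rewrite (F_swap x p q) // (IH (fun w r => F w (x :: r))); first by ring.
by move=> w u r eq_size; apply: (F_swap w (x :: u)); rewrite /= addSn eq_size.
Qed.

Lemma altsum_rep F p y q :
  (forall w u r, (size u + size r).+1 = (size p + size q)%N ->
     F w (u ++ y :: y :: r) = 0) ->
  altsum F (p ++ y :: y :: q) = 0.
Proof.
elim: p F => [|x p IH] F F_rep /=.
  rewrite (@eq_in_altsum _ (fun w r => 0) q) ?altsum0; first by ring.
  by move=> u w v eq_q; apply: (F_rep w [::]); rewrite eq_q !size_cat /= addnS.
rewrite (F_rep x p q) // (IH (fun w r => F w (x :: r))); first by ring.
by move=> w u r eq_size; apply: (F_rep w (x :: u)); rewrite /= addSn eq_size.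
Qed.

End AltSum.

Section Pfexp.
Variables (X : eqType) (R : comPzRingType).
Implicit Types (g h : X -> X -> R) (l p q r s : seq X).

(* Expansion along the first letter; the fuel [k] suffices once [size l <= k]. *)
Fixpoint pfexp_fuel g k l : R :=
  if l is x :: s then
    if k is k'.+1 then altsum (fun y r => g x y * pfexp_fuel g k' r) s else 0
  else 1.

Definition pfexp g l := pfexp_fuel g (size l) l.

Lemma pfexp_fuel_eq g k k' l : (size l <= k)%N -> (size l <= k')%N ->
  pfexp_fuel g k l = pfexp_fuel g k' l.
Proof.
elim: k k' l => [|k IH] [|k'] [|x s] //= le_k le_k'.
apply: eq_altsum_shorter => y r lt_r; congr (_ * _).
by apply: IH; lia.
Qed.

Lemma pfexp_cons g x s : pfexp g (x :: s) = altsum (fun y r => g x y * pfexp g r) s.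
Proof.
apply: eq_altsum_shorter => y r lt_r; congr (_ * _).
by apply: pfexp_fuel_eq => //; apply: ltnW.
Qed.

Lemma eq_pfexp g h l : g =2 h -> pfexp g l = pfexp h l.
Proof.
move=> eq_gh; rewrite /pfexp; move: (size l) => k; elim: k l => [|k IH] [|x s] //=.
by apply: eq_altsum => y r; rewrite eq_gh IH.
Qed.

Lemma pfexp_odd g l : odd (size l) -> pfexp g l = 0.
Proof.
have [N] := ubnP (size l); elim: N l => [|N IH] [|x s] //= lt_s odd_s.
rewrite pfexp_cons -(altsum0 R s); apply: eq_in_altsum => u y v eq_s.
by rewrite IH ?mulr0 //; move: lt_s odd_s; rewrite eq_s !size_cat /= addnS negbK //; lia.
Qed.

Lemma pfexp_scale (g h : X -> X -> R) (lam : R) (chi : X -> R) l : uniq l ->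
  {in l &, forall c d, c != d -> h c d = lam * chi c * chi d * g c d} ->
  pfexp h l = lam ^+ (size l)./2 * \prod_(w <- l) chi w * pfexp g l.
Proof.
have [N] := ubnP (size l); elim: N l => [|N IH] [|x s]; rewrite ?ltn0 // => lt_s.
  by rewrite big_nil !mul1r.
rewrite cons_uniq => /andP[x_out uniq_s] scale_hg; rewrite !pfexp_cons -altsumMl.
apply: eq_in_altsum => u y v eq_s.
rewrite eq_s in x_out uniq_s.
have /andP[y_out uniq_uv] : uniq (y :: u ++ v).
  by move: uniq_s; rewrite -(cat1s y v) uniq_catCA.
have mem_s w : w \in u ++ v -> w \in x :: s.
  by rewrite eq_s !inE !mem_cat inE => /orP[] ->; rewrite ?orbT.
have neq_xy : x != y by apply: contraNneq x_out => ->; rewrite mem_cat inE eqxx orbT.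
rewrite scale_hg ?inE ?eqxx ?eq_s ?mem_cat ?inE ?eqxx ?orbT //.
have lt_uv : (size (u ++ v) < N)%N by move: lt_s; rewrite eq_s /= !size_cat /=; lia.
rewrite (IH _ lt_uv uniq_uv) => [|c d /mem_s c_in /mem_s d_in]; last exact: scale_hg.
have -> : (size (x :: u ++ y :: v))./2 = (size (u ++ v))./2.+1.
  by rewrite /= !size_cat /= addnS.
rewrite !big_cons !big_cat /= big_cons exprS; ring.
Qed.

Section Alternating.
Variable g : X -> X -> R.
Hypothesis g_anti : forall x y, g x y = - g y x.
Hypothesis g_diag : forall x, g x x = 0.

Lemma pfexp_swap_head y z q : pfexp g (z :: y :: q) = - pfexp g (y :: z :: q).
Proof.
have expand2 y1 z1 : pfexp g (y1 :: z1 :: q) = g y1 z1 * pfexp g q -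
    altsum (fun w r => altsum (fun w' r' => g y1 w * (g z1 w' * pfexp g r')) r) q.
  rewrite pfexp_cons /=; congr (_ - _); apply: eq_altsum => w r.
  by rewrite pfexp_cons altsumMl.
rewrite !expand2 altsum_pairC (g_anti z y).
by under [X in _ = - (_ - X)]eq_altsum => w r do
  under eq_altsum => w' r' do rewrite mulrCA; ring.
Qed.

Lemma pfexp_swap p y z q :
  pfexp g (p ++ z :: y :: q) = - pfexp g (p ++ y :: z :: q).
Proof.
have [N] := ubnP (size p + size q)%N.
elim: N p q => [|N IH] [|x p] q; rewrite ?ltn0 // => lt_pq.
  exact: pfexp_swap_head.
rewrite /= !pfexp_cons; apply: altsum_swap => w u r eq_size.
by rewrite IH ?mulrN //; move: lt_pq => /=; lia.
Qed.

Lemma pfexp_rep_head y q : pfexp g (y :: y :: q) = 0.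
Proof.
rewrite pfexp_cons /= g_diag mul0r sub0r.
rewrite (@eq_altsum _ _ _
  (fun w r => altsum (fun w' r' => g y w * (g y w' * pfexp g r')) r)).
  by rewrite altsum_pair_sym ?oppr0 // => *; ring.
by move=> w r; rewrite pfexp_cons altsumMl.
Qed.

Lemma pfexp_rep p y q : pfexp g (p ++ y :: y :: q) = 0.
Proof.
have [N] := ubnP (size p + size q)%N.
elim: N p q => [|N IH] [|x p] q; rewrite ?ltn0 // => lt_pq.
  exact: pfexp_rep_head.
rewrite /= !pfexp_cons; apply: altsum_rep => w u r eq_size.
by rewrite IH ?mulr0 //; move: lt_pq => /=; lia.
Qed.

Lemma pfexp_move p u y v :
  pfexp g (p ++ u ++ y :: v) = (-1) ^+ size u * pfexp g (p ++ y :: u ++ v).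
Proof.
elim: u p => [|w u IH] p /=; first by rewrite mul1r.
rewrite -cat1s catA IH -catA /= pfexp_swap exprS; ring.
Qed.

Lemma pfexp_dup p y r : y \in p -> pfexp g (p ++ y :: r) = 0.
Proof.
case/splitPr=> p1 p2; rewrite -catA /= -cat1s catA.
by rewrite pfexp_move -catA /= pfexp_rep mulr0.
Qed.

End Alternating.
End Pfexp.

Section CrossPfaffian.
Variables (X : eqType) (R : comPzRingType) (g : X -> X -> R).
Implicit Types (A B : seq X).

Definition cross_pf A B := altsum (fun y r => pfexp g (A ++ [:: y]) * pfexp g r) B.

Lemma cross_pf_consl a A B :
  cross_pf (a :: A) B = altsum (fun z r => g a z * cross_pf r B) A
                        + (-1) ^+ size A * pfexp g A * pfexp g (a :: B).
Proof.
have expand y : pfexp g (a :: A ++ [:: y]) =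
    altsum (fun z r => g a z * pfexp g (r ++ [:: y])) A
    + (-1) ^+ size A * (g a y * pfexp g A).
  by rewrite pfexp_cons altsum_cat /= subr0 cats0.
rewrite /cross_pf /= (@eq_altsum _ _ _ (fun y r =>
    altsum (fun z r2 => g a z * pfexp g (r2 ++ [:: y]) * pfexp g r) A
    + (-1) ^+ size A * pfexp g A * (g a y * pfexp g r))); last first.
  by move=> y r; rewrite expand mulrDl -altsumMr; congr (_ + _); ring.
rewrite altsumD altsumMl pfexp_cons exchange_altsum; congr (_ + _).
by apply: eq_altsum => z r2; rewrite -altsumMl; apply: eq_altsum => y r; ring.
Qed.

Lemma cross_pf_consr a A B :
  cross_pf B (a :: A) = pfexp g (B ++ [:: a]) * pfexp g A
                        + altsum (fun z r => g a z * cross_pf B r) A.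
Proof.
rewrite /cross_pf /=; congr (_ + _).
rewrite (@eq_altsum _ _ _ (fun z r =>
    altsum (fun w r' => pfexp g (B ++ [:: z]) * (g a w * pfexp g r')) r)); last first.
  by move=> z r; rewrite pfexp_cons altsumMl.
rewrite altsum_pairC opprK; apply: eq_altsum => z r; rewrite -altsumMl.
by apply: eq_altsum => w r'; ring.
Qed.

Hypothesis g_anti : forall x y, g x y = - g y x.

Lemma cross_pf_antisym A B : ~~ odd (size A + size B) -> cross_pf A B = - cross_pf B A.
Proof.
have [N] := ubnP (size A); elim: N A B => [|N IH] [|a A] B //= lt_A even_AB.
  rewrite /cross_pf /= oppr0 -(altsum0 R B).
  by apply: eq_altsum => y r; rewrite pfexp_cons /= mul0r.
have IH_A : altsum (fun z r => g a z * cross_pf r B) A =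
            - altsum (fun z r => g a z * cross_pf B r) A.
  rewrite -altsumN; apply: eq_in_altsum => u y v eq_A.
  rewrite IH ?mulrN //; move: lt_A even_AB; rewrite eq_A !size_cat /= ?addnS ?addSn.
  - by lia.
  - by rewrite /= negbK.
have move_a : pfexp g (B ++ [:: a]) = - (-1) ^+ size A * pfexp g (a :: B).
  have := pfexp_move g_anti [::] B a [::]; rewrite /= !cats0 => ->.
  congr (_ * _); rewrite -signr_odd -[in RHS]signr_odd -signrN; congr (_ ^+ _).
  by move: even_AB; rewrite negbK oddD; case: (odd (size A)); case: (odd _).
rewrite cross_pf_consl cross_pf_consr move_a IH_A; ring.
Qed.

Hypothesis g_diag : forall x, g x x = 0.

Lemma pfexp_mul_expansion a x s : ~~ odd (size a) -> odd (size s) ->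
  altsum (fun y r => pfexp g (a ++ [:: x; y]) * pfexp g (a ++ r)) s =
  pfexp g a * pfexp g (a ++ x :: s).
Proof.
move=> even_a odd_s.
have dup_a B (G : X -> seq X -> R) :
    altsum (fun y r => pfexp g ((a ++ B) ++ [:: y]) * G y r) a = 0.
  rewrite -(altsum0 R a); apply: eq_in_altsum => u y v eq_a.
  by rewrite (pfexp_dup g_anti g_diag) ?mul0r // eq_a !mem_cat inE eqxx !orbT.
have even_ax_as : ~~ odd (size (a ++ [:: x]) + size (a ++ s)).
  by rewrite !size_cat !oddD /= (negbTE even_a) odd_s.
move: (cross_pf_antisym even_ax_as).
rewrite /cross_pf !altsum_cat -signr_odd (negbTE even_a) !mul1r.
rewrite !dup_a /= subr0 cats0 !add0r -catA.
rewrite (pfexp_move g_anti a s x [::]) -signr_odd odd_s cats0 => rel.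
by under eq_altsum => y r do rewrite (catA a [:: x] [:: y]); rewrite rel; ring.
Qed.
End CrossPfaffian.

Section Words.
Variable X : eqType.
Implicit Types (a u v : seq X) (x y c d : X).

Lemma perm_pair_front a x u y v :
  perm_eq (a ++ x :: u ++ y :: v) (x :: y :: a ++ u ++ v).
Proof.
rewrite -cat1s perm_catCA /= perm_cons -cat1s catA perm_catCA.
by rewrite -catA.
Qed.

Lemma uniq_pair_front a x u y v : uniq (a ++ x :: u ++ y :: v) ->
  [/\ x \notin a ++ u ++ v, y \notin a ++ u ++ v & uniq (a ++ u ++ v)].
Proof.
by rewrite (perm_uniq (perm_pair_front a x u y v)) /= inE negb_or => /and3P[/andP[]].
Qed.

Lemma wminus_pair a u v x y : uniq (a ++ x :: u ++ y :: v) ->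
  wminus (a ++ x :: u ++ y :: v) [:: x; y] = a ++ u ++ v.
Proof.
case/uniq_pair_front=> x_out y_out _.
rewrite /wminus !filter_cat /= !inE !eqxx /= filter_cat /= !inE eqxx orbT /= -!filter_cat.
apply/all_filterP/allP => w w_in; rewrite !inE negb_or.
by apply/andP; split; [apply: contraNneq x_out | apply: contraNneq y_out] => <-.
Qed.

Lemma size_wminus_pair u c d : uniq u -> c != d ->
  size u = (size (wminus u [:: c; d]) + (c \in u) + (d \in u))%N.
Proof.
move=> uniq_u neq_cd; rewrite /wminus size_filter -addnA.
rewrite -(count_uniq_mem c uniq_u) -(count_uniq_mem d uniq_u) -count_predUI.
rewrite (@eq_count _ (predI _ _) pred0) => [|z /=]; last first.
  by apply/andP => -[/eqP-> /eqP eq_d]; rewrite eq_d eqxx in neq_cd.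
rewrite count_pred0 addn0 addnC -[LHS](count_predC [pred z | z \in [:: c; d]] u).
by congr (_ + _)%N; apply: eq_count => z; rewrite /= !inE.
Qed.

End Words.

Section PfMinors.
Variables (X : eqType) (R : comPzRingType) (f : X -> X -> R).
Implicit Types (a l u v : seq X) (x y c d : X).

Definition pfminor l c d := pfexp f (wminus l [:: c; d]).

Hypothesis f_anti : forall x y, f x y = - f y x.

Lemma pfminor_move a x u y v c d : uniq (a ++ x :: u ++ y :: v) ->
  c \in u ++ v -> d \in u ++ v -> c != d ->
  pfminor (a ++ x :: u ++ y :: v) c d =
  (-1) ^+ size u * (-1) ^+ (c \in u) * (-1) ^+ (d \in u)
  * pfminor ((a ++ [:: x; y]) ++ u ++ v) c d.
Proof.
move=> uniq_l c_in d_in neq_cd; have [x_out y_out uniq_auv] := uniq_pair_front uniq_l.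
have kept w : w \notin a ++ u ++ v -> w \notin [:: c; d].
  move=> w_out; rewrite !inE negb_or.
  by apply/andP; split; apply: contraNneq w_out => ->; rewrite mem_cat ?c_in ?d_in orbT.
rewrite /pfminor /wminus !filter_cat /= (negbTE (kept x x_out)) filter_cat /=.
rewrite (negbTE (kept y y_out)) -catA /=.
have := pfexp_move f_anti ([seq z <- a | z \notin [:: c; d]] ++ [:: x])
  [seq z <- u | z \notin [:: c; d]] y [seq z <- v | z \notin [:: c; d]].
rewrite -!catA /= => ->; congr (_ * _).
have uniq_u : uniq u by move: uniq_auv; rewrite !cat_uniq => /and3P[_ _ /andP[]].
rewrite [in RHS](size_wminus_pair uniq_u neq_cd) !exprD.
set e := (-1) ^+ size _; set sc := (-1) ^+ (c \in u); set sd := (-1) ^+ (d \in u).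
have -> : e * sc * sd * sc * sd = e * sc ^+ 2 * sd ^+ 2 by ring.
by rewrite !sqrr_sign !mulr1.
Qed.

Lemma pfexp_pfminor_move a x u y v : uniq (a ++ x :: u ++ y :: v) ->
  pfexp (pfminor (a ++ x :: u ++ y :: v)) (u ++ v) =
  ((-1) ^+ size u) ^+ ((size (u ++ v))./2).+1
  * pfexp (pfminor ((a ++ [:: x; y]) ++ u ++ v)) (u ++ v).
Proof.
move=> uniq_l; have [_ _ uniq_auv] := uniq_pair_front uniq_l.
have uniq_uv : uniq (u ++ v) by move: uniq_auv; rewrite cat_uniq => /and3P[].
have /and3P[_ u_v _] : [&& uniq u, ~~ has (mem u) v & uniq v] by rewrite -cat_uniq.
rewrite (@pfexp_scale _ _ (pfminor ((a ++ [:: x; y]) ++ u ++ v)) _ ((-1) ^+ size u)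
  (fun w => (-1) ^+ (w \in u)) _ uniq_uv)
  => [|c d c_in d_in]; last exact: pfminor_move.
have prod_sign : \prod_(w <- u ++ v) (-1) ^+ (w \in u) = (-1) ^+ size u :> R.
  rewrite big_cat /= [\prod_(w <- v) _]big1_seq ?mulr1 => [|w /andP[_ w_v]]; last first.
    by have /negbTE-> : w \notin u := hasPn u_v w w_v.
  by rewrite (eq_big_seq (fun=> (-1) ^+ 1)) => [|w ->] //; rewrite prodrXr sum1_size.
by rewrite prod_sign exprSr.
Qed.

Hypothesis f_diag : forall x, f x x = 0.

Lemma pfexp_pfminor n a b : uniq (a ++ b) -> ~~ odd (size a) ->
  size b = (2 * n.+1)%N ->
  pfexp f a * pfexp f (a ++ b) ^+ n = pfexp (pfminor (a ++ b)) b.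
Proof.
elim: n a b => [|n IH] a b uniq_ab even_a.
  case: b uniq_ab => [|x [|y [|? ?]]] // uniq_ab _.
  rewrite pfexp_cons /= subr0 !mulr1 /pfminor.
  by have := wminus_pair (u := [::]) (v := [::]) uniq_ab; rewrite /= cats0 => ->.
case: b uniq_ab => [|x s] // uniq_l size_s.
have odd_s : odd (size s).
  by move: (congr1 odd size_s); rewrite mul2n odd_double /= => /negbFE.
rewrite exprS mulrA -(pfexp_mul_expansion f_anti f_diag x even_a odd_s) -altsumMr.
rewrite pfexp_cons; apply: eq_in_altsum => u y v eq_s; rewrite eq_s in uniq_l size_s *.
set l' := (a ++ [:: x; y]) ++ u ++ v.
have uniq_l' : uniq l'.
  move: uniq_l; rewrite /l' -catA /=.
  rewrite (perm_uniq (perm_pair_front a x u y v)).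
  by rewrite (perm_uniq (perm_pair_front a x [::] y (u ++ v))).
have size_uv : size (u ++ v) = (2 * n.+1)%N.
  by move: size_s; rewrite /= !size_cat /=; lia.
have even_axy : ~~ odd (size (a ++ [:: x; y])) by rewrite size_cat addn2 /= negbK.
have move_y : pfexp f (a ++ x :: u ++ y :: v) = (-1) ^+ size u * pfexp f l'.
  by have := pfexp_move f_anti (a ++ [:: x]) u y v; rewrite /l' -!catA.
rewrite [pfminor _ x y]/pfminor wminus_pair // pfexp_pfminor_move // -IH //.
rewrite move_y size_uv mul2n doubleK exprMn; set e := (-1) ^+ size u.
have -> : e ^+ n.+2 = e ^+ n by rewrite !exprSr -mulrA -expr2 sqrr_sign mulr1.
ring.
Qed.

End PfMinors.

Section Matchings.
Variables (X : eqType) (R : comPzRingType).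
Implicit Types (l m s w : seq X) (x y z : X).

Lemma perm_cons_rem y s m : y \in s -> perm_eq m (rem y s) -> perm_eq (y :: m) s.
Proof.
move=> y_s perm_m; apply: (@perm_trans _ (y :: rem y s)).
  by rewrite perm_cons.
by rewrite perm_sym perm_to_rem.
Qed.

Lemma perm_matchings k l m : (size l <= k)%N -> m \in matchings_aux k l -> perm_eq m l.
Proof.
elim: k l m => [|k IH] [|x s] m //=; rewrite ?inE => size_l; try by move/eqP->.
case/flattenP=> _ /mapP[y y_s ->] /mapP[m' m'_in ->].
rewrite perm_cons; apply: (perm_cons_rem y_s).
by apply: IH m'_in; rewrite size_rem //; move: size_l; lia.
Qed.

Lemma eq_in_inversions l1 l2 w :
  {in w &, forall z1 z2, (index z1 l1 < index z2 l1)%N = (index z1 l2 < index z2 l2)%N} ->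
  inversions l1 w = inversions l2 w.
Proof.
elim: w => [|x w IH] //= eq_lt; congr (_ + _)%N.
  by apply: eq_in_count => z z_w /=; apply: eq_lt; rewrite inE ?z_w ?eqxx ?orbT.
by apply: IH => z1 z2 z1_w z2_w; apply: eq_lt; rewrite inE ?z1_w ?z2_w orbT.
Qed.

Lemma count_index_lt_rem y s : uniq s ->
  count (fun z => index z s < index y s)%N (rem y s) = index y s.
Proof.
elim: s => [|w s IH] //= /andP[w_out uniq_s]; case: eqP => [->|/eqP neq_wy] /=.
  by rewrite (@eq_count _ _ pred0) ?count_pred0 // => z; rewrite ltn0.
rewrite eqxx /= add1n; congr (_.+1); rewrite -[RHS]IH //.
apply: eq_in_count => z /mem_rem z_s /=.
by have /negbTE-> : w != z by apply: contraNneq w_out => ->.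
Qed.

Lemma index_rem_lt y s z1 z2 : uniq s -> z1 \in rem y s -> z2 \in rem y s ->
  (index z1 (rem y s) < index z2 (rem y s))%N = (index z1 s < index z2 s)%N.
Proof.
elim: s => [|w s IH] //= /andP[w_out uniq_s]; case: eqP => [_|_] z1_in z2_in /=.
  have /negbTE-> : w != z1 by apply: contraNneq w_out => ->.
  by have /negbTE-> : w != z2 by apply: contraNneq w_out => ->.
case: (eqVneq w z1) => [_|neq1]; case: (eqVneq w z2) => [_|neq2] //=.
rewrite ltnS IH //.
- by move: z1_in; rewrite inE eq_sym (negbTE neq1).
- by move: z2_in; rewrite inE eq_sym (negbTE neq2).
Qed.

Lemma sgn_perm l m : uniq l -> perm_eq m l -> sgn R l m = (-1) ^+ inversions l m.
Proof.
move=> uniq_l perm_ml; rewrite /sgn (perm_uniq perm_ml) uniq_l /=.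
have -> : all (fun y => y \in l) m by apply/allP => z; rewrite (perm_mem perm_ml).
have -> : wminus l m = [::].
  rewrite /wminus (@eq_in_filter _ _ pred0) ?filter_pred0 // => z z_l.
  by rewrite /= (perm_mem perm_ml) z_l.
by rewrite cats0.
Qed.

Lemma sgn_cons2 x y s m : uniq (x :: s) -> y \in s -> perm_eq m (rem y s) ->
  sgn R (x :: s) (x :: y :: m) = (-1) ^+ index y s * sgn R (rem y s) m.
Proof.
move=> uniq_xs y_s perm_m; have /andP[x_out uniq_s] := uniq_xs.
have uniq_rem : uniq (rem y s) by apply: rem_uniq.
have m_rem z : z \in m -> z \in rem y s by rewrite (perm_mem perm_m).
have m_ne_x z : z \in m -> x != z.
  by move=> /m_rem /mem_rem z_s; apply: contraNneq x_out => ->.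
have perm_xym : perm_eq (x :: y :: m) (x :: s).
  by rewrite perm_cons; apply: perm_cons_rem.
rewrite !sgn_perm // -exprD /= eqxx (@eq_count _ _ pred0) ?count_pred0 //.
have /negbTE-> : x != y by apply: contraNneq x_out => ->.
rewrite ltn0 add0n; congr (_ ^+ (_ + _))%N.
  rewrite -[RHS](count_index_lt_rem y uniq_s) -(permP perm_m).
  by apply: eq_in_count => z /m_ne_x /negbTE /= ->.
apply: eq_in_inversions => z1 z2 z1_m z2_m /=.
by rewrite (negbTE (m_ne_x _ z1_m)) (negbTE (m_ne_x _ z2_m)) ltnS index_rem_lt ?m_rem.
Qed.

Lemma pfexp_matchings (g : X -> X -> R) k l : uniq l -> (size l <= k)%N ->
  \sum_(m <- matchings_aux k l) sgn R l m * \prod_(p <- pairs_of m) g p.1 p.2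
  = pfexp g l.
Proof.
elim: k l => [|k IH] [|x s] //= uniq_l size_l;
  try by rewrite big_cons big_nil /sgn /= big_nil mulr1 addr0.
rewrite big_flatten /= big_map pfexp_cons (altsumE _ (proj2 (andP uniq_l))).
apply: eq_big_seq => y y_s; rewrite big_map.
have size_rem : (size (rem y s) <= k)%N by rewrite size_rem //; move: size_l; lia.
rewrite [RHS]mulrA -(IH _ (rem_uniq _ (proj2 (andP uniq_l))) size_rem) big_distrr /=.
apply: eq_big_seq => m m_in.
rewrite big_cons sgn_cons2 //; last exact: perm_matchings m_in.
by rewrite /=; ring.
Qed.

Lemma pfE (g : X -> X -> R) l : uniq l -> pf g l = pfexp g l.
Proof.
move=> uniq_l; rewrite /pf uniq_l /=.
by case: ifPn => [_|/negPn odd_l]; [apply: pfexp_matchings | rewrite pfexp_odd].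
Qed.

End Matchings.

Theorem mainTheorem4 (X : eqType) (R : comPzRingType) (f : X -> X -> R)
  (f_anti : forall x y, f x y = - f y x) (f_diag : forall x, f x x = 0)
  (a b : seq X) (n : nat)
  (huniq : uniq (a ++ b)) (ha : ~~ odd (size a))
  (hb : size b = (2 * n)%N) (hn : (1 <= n)%N) :
  pf f a * pf f (a ++ b) ^+ n.-1 =
  \sum_(m <- matchings b)
     sgn R b m * \prod_(p <- pairs_of m) pf f (wminus (a ++ b) [:: p.1; p.2]).
Proof.
have := huniq; rewrite cat_uniq => /and3P[uniq_a _ uniq_b].
rewrite !pfE // /matchings.
rewrite (pfexp_matchings (fun c d => pf f (wminus (a ++ b) [:: c; d])) uniq_b) //.
rewrite [RHS](@eq_pfexp _ _ _ (pfminor f (a ++ b))) => [|c d].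
  by case: n hb hn => [|n] // hb _; apply: pfexp_pfminor.
by rewrite pfE ?filter_uniq.
Qed.
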